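(* Let $S$ be a right non-degenerate semigroup of skew type with generating set $X$, $|X|=n$. Let $2\le i\le n+1$, let $Y\subseteq X$ with $|Y|=i-1$, let $Z\subseteq Y$ and $b\in D_Z$, and let $k$ be the length of $b$ in the generators $X$. Then $(S_{i-1})^k\cap D_Y\subseteq bS$. Furthermore, $(S_{i-1})^{k+1}\cap D_Y\subseteq bS_{i-1}$ and $(S_{i-1}\cap S_{i-1}')^{k+1}\cap D_Y\subseteq b(S_{i-1}\cap S_{i-1}')$.
   Context: A semigroup of skew type is a monoid $S$ with a monoid presentation $S=\langle x_1,\ldots,x_n \mid x_ix_j=x_kx_l\rangle$ consisting of $\binom{n}{2}$ relations, each of the form $x_ix_j=x_kx_l$ with $i\neq j$, $k\neq l$, such that every word $x_px_q$ with $p\neq q$ appears (as one side) in exactly one of the relations; $X=\{x_1,\ldots,x_n\}$. For $a,b\in X$, the partner of $ab$ is the other side of the unique defining relation containing $ab$ if $a\neq b$, and $ab$ itself if $a=b$. $S$ is right non-degenerate if for every $x\in X$ the map $X\to X$ sending $y$ to the first letter of the partner of $xy$ is surjective. For $W\subseteq X$: $S_W=\bigcap_{w\in W}wS$, $S'_W=\bigcap_{w\in W}Sw$, and $D_W=\{s\in S_W\mid \text{if } s=xt \text{ with } x\in X,\ t\in S, \text{ then } x\in W\}$. For $1\le j\le n$: $S_j=\bigcup_{W\subseteq X,|W|=j}S_W$ and $S'_j=\bigcup_{W\subseteq X,|W|=j}S'_W$. For subsets $A\subseteq S$, $A^k$ denotes the set of products of $k$ elements of $A$. *)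

(* The skew-type monoid S is encoded as the free monoid
   seq 'I_n (words in the generators x_0..x_{n-1}) modulo the congruence
   generated by the defining relations x_a x_b = partner(x_a x_b). *)
From Stdlib Require Import Relations.
From mathcomp Require Import all_boot.
Set Implicit Arguments. Unset Strict Implicit. Unset Printing Implicit Defensive.

Section Skew.
Variable n : nat.
Notation X := 'I_n.
Notation word := (seq X).

(* partner p a b = the other side of the unique relation containing x_a x_b
   (for a <> b), and (a,a) when a = b. *)
Definition skew_type (p : X -> X -> X * X) : Prop :=
  (forall a : X, p a a = (a, a)) /\
  (forall a b : X, a != b ->
     [/\ (p a b).1 != (p a b).2, p a b != (a, b) & p (p a b).1 (p a b).2 = (a, b)]).

Definition right_nondegenerate (p : X -> X -> X * X) : Prop :=
  forall x : X, forall z : X, exists y : X, (p x y).1 = z.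

Inductive step (p : X -> X -> X * X) : word -> word -> Prop :=
| Step (u v : word) (a b : X) :
    step p (u ++ [:: a; b] ++ v) (u ++ [:: (p a b).1; (p a b).2] ++ v).

Definition eqS (p : X -> X -> X * X) : word -> word -> Prop :=
  clos_refl_sym_trans word (step p).

Definition inSW p (W : {set X}) (s : word) : Prop :=
  forall w, w \in W -> exists t, eqS p s (w :: t).
Definition inSW' p (W : {set X}) (s : word) : Prop :=
  forall w, w \in W -> exists t, eqS p s (rcons t w).
Definition inD p (W : {set X}) (s : word) : Prop :=
  inSW p W s /\ (forall (x : X) (t : word), eqS p s (x :: t) -> x \in W).
Definition inSj p (j : nat) (s : word) : Prop :=
  exists W : {set X}, #|W| = j /\ inSW p W s.
Definition inSj' p (j : nat) (s : word) : Prop :=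
  exists W : {set X}, #|W| = j /\ inSW' p W s.
Definition inPow p (A : word -> Prop) (k : nat) (s : word) : Prop :=
  exists ws : seq word, size ws = k /\ (forall w, w \in ws -> A w) /\ eqS p s (flatten ws).
Definition inLmul p (b : word) (A : word -> Prop) (s : word) : Prop :=
  exists t, A t /\ eqS p s (b ++ t).
End Skew.

(* Write [sigma x a] for the first letter of the partner of [x a].  Right
   non-degeneracy makes each [sigma x] a bijection of [X], so left
   multiplication by [x] maps [S_W] into [S_(sigma x W)] and preserves [S_j].
   Suppose every word equal to [s], and every word equal to [b], starts with a
   letter of [Y], and [s] is a product of [|b|] elements of [S_j] with
   [j = |Y|].  The first factor lies in some [S_W] with [W] inside [Y] and
   [|W| = j], so [W = Y] and this factor can be rewritten to start with the
   first letter [x] of [b].  Absorbing the rest of it into the next factor and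
   removing [x] leaves the same situation for the tail of [b] and the preimage
   of [Y] under [sigma x]; hence [s] lies in [bS].  An extra factor from [S_j]
   (or from [S_j] meet [S'_j]) survives as the cofactor. *)
From Stdlib Require Import Relations.
From mathcomp Require Import all_boot.
Set Implicit Arguments. Unset Strict Implicit. Unset Printing Implicit Defensive.

Lemma surjective_injective (T : finType) (f : T -> T) :
  (forall y, exists x, f x = y) -> injective f.
Proof.
move=> f_onto x1 x2; have /image_injP f_inj : #|image f T| == #|T|.
  rewrite eqn_leq max_card; apply/subset_leq_card/subsetP => y _.
  by have [x <-] := f_onto y; apply: image_f.
exact: f_inj.
Qed.

Section SkewMonoid.
Variables (n : nat) (p : 'I_n -> 'I_n -> 'I_n * 'I_n).
Local Notation word := (seq 'I_n).
Local Notation eqS := (eqS p).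

Definition heads_in (Y : {set 'I_n}) (s : word) : Prop :=
  forall x t, eqS s (x :: t) -> x \in Y.

Definition sigma (y a : 'I_n) : 'I_n := (p y a).1.

Lemma eqS_refl s : eqS s s. Proof. exact: rst_refl. Qed.
Lemma eqS_trans s t u : eqS s t -> eqS t u -> eqS s u. Proof. exact: rst_trans. Qed.

Lemma eqS_catl w s t : eqS s t -> eqS (w ++ s) (w ++ t).
Proof.
elim=> [_ _ [u v a b] | x | x y _ | x y z _ ih1 _ ih2].
- by apply: rst_step; have := Step p (w ++ u) v a b; rewrite -!catA.
- exact: rst_refl.
- exact: rst_sym.
- exact: rst_trans ih1 ih2.
Qed.

Lemma eqS_catr w s t : eqS s t -> eqS (s ++ w) (t ++ w).
Proof.
elim=> [_ _ [u v a b] | x | x y _ | x y z _ ih1 _ ih2].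
- by apply: rst_step; rewrite -!catA; apply: Step.
- exact: rst_refl.
- exact: rst_sym.
- exact: rst_trans ih1 ih2.
Qed.

Lemma eqS_cons2 y a t : eqS [:: y, a & t] [:: sigma y a, (p y a).2 & t].
Proof. exact/rst_step/(Step p [::] t y a). Qed.

Lemma heads_in_eqS Y s s' : eqS s s' -> heads_in Y s -> heads_in Y s'.
Proof. by move=> ss' Ys x t /(eqS_trans ss'); apply: Ys. Qed.

Lemma heads_in_catr Y s w : heads_in Y (s ++ w) -> heads_in Y s.
Proof. by move=> Ysw x t /(eqS_catr w); apply: Ysw. Qed.

Lemma heads_in_cons Y x s : heads_in Y (x :: s) -> heads_in (sigma x @^-1: Y) s.
Proof.
move=> Yxs y t /(eqS_catl [:: x]) /eqS_trans /(_ (eqS_cons2 _ _ _)).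
by rewrite inE; apply: Yxs.
Qed.

Lemma heads_in_inSW Y W s : heads_in Y s -> inSW p W s -> W \subset Y.
Proof. by move=> Ys Ws; apply/subsetP => w /Ws [t]; apply: Ys. Qed.

Lemma inSW'_catl W v w : inSW' p W w -> inSW' p W (v ++ w).
Proof.
by move=> Ww x /Ww [t wt]; exists (v ++ t); rewrite rcons_cat; apply: eqS_catl.
Qed.

Lemma inSj'_catl j v w : inSj' p j w -> inSj' p j (v ++ w).
Proof. by case=> W [cardW Ww]; exists W; split; last apply: inSW'_catl. Qed.

Lemma inPow_rcons (A : word -> Prop) k s : inPow p A k.+1 s ->
  exists v w, [/\ inPow p A k v, A w & eqS s (v ++ w)].
Proof.
case=> ws [+ [Aws sws]]; case/lastP: ws Aws sws => // ws w Aws sws.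
rewrite size_rcons => -[sz]; exists (flatten ws), w; split.
- exists ws; split=> //; split=> [u u_ws|]; last exact: eqS_refl.
  by apply: Aws; rewrite mem_rcons inE u_ws orbT.
- by apply: Aws; rewrite mem_rcons mem_head.
- by rewrite -cats1 flatten_cat /= cats0 in sws.
Qed.

Hypothesis Hnd : right_nondegenerate p.

Lemma sigma_inj y : injective (sigma y).
Proof. exact/surjective_injective/Hnd. Qed.

Lemma inSW_cons y W w : inSW p W w -> inSW p (sigma y @: W) (y :: w).
Proof.
move=> Ww _ /imsetP [a /Ww [t wt] ->]; exists ((p y a).2 :: t).
exact: eqS_trans (eqS_catl [:: y] wt) (eqS_cons2 _ _ _).
Qed.

Lemma inSj_catl j v w : inSj p j w -> inSj p j (v ++ w).
Proof.
elim: v => [//|y v IHv] /IHv [W [cardW Wvw]].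
exists (sigma y @: W); split; last exact: inSW_cons.
by rewrite card_imset //; apply: sigma_inj.
Qed.

Lemma flatten_inSj_prefix j (b : word) (Y : {set 'I_n}) (ws : seq word) :
  #|Y| = j -> heads_in Y b -> size ws = size b ->
  (forall w, w \in ws -> inSj p j w) -> heads_in Y (flatten ws) ->
  exists t, eqS (flatten ws) (b ++ t).
Proof.
elim: b Y ws => [|x b IHb] Y [|w1 ws] //= cardY Yb.
  by exists [::]; apply: eqS_refl.
move=> [sz] Sws Yws.
have [W [cardW Ww1]] := Sws w1 (mem_head _ _).
have WY : W = Y.
  apply/eqP; rewrite eqEcard cardY cardW leqnn andbT.
  exact: heads_in_inSW (heads_in_catr Yws) Ww1.
have [u w1u] : exists u, eqS w1 (x :: u).
  by apply: Ww1; rewrite WY; apply: Yb; apply: eqS_refl.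
have ws_xu : eqS (w1 ++ flatten ws) (x :: u ++ flatten ws).
  exact: eqS_catr w1u.
case: ws => [|w2 ws] in sz Sws Yws ws_xu *.
  by case: b sz {IHb Yb} => // _; exists u; rewrite /= cats0.
have [t ut] : exists t, eqS (flatten ((u ++ w2) :: ws)) (b ++ t).
  apply: (IHb (sigma x @^-1: Y)) => //.
  - by rewrite card_preimset //; apply: sigma_inj.
  - exact/heads_in_cons.
  - move=> w; rewrite inE => /predU1P [-> | w_ws].
      by apply/inSj_catl/Sws; rewrite !inE eqxx orbT.
    by apply: Sws; rewrite !inE w_ws !orbT.
  - by apply/heads_in_cons; rewrite /= -catA; apply: heads_in_eqS ws_xu Yws.
by exists t; apply: eqS_trans ws_xu _; move: ut => /(eqS_catl [:: x]); rewrite /= catA.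
Qed.

Lemma inPow_inSj_prefix j (b : word) (Y : {set 'I_n}) (s : word) :
  #|Y| = j -> heads_in Y b -> inPow p (inSj p j) (size b) s -> heads_in Y s ->
  exists t, eqS s (b ++ t).
Proof.
move=> cardY Yb [ws [sz [Sws sws]]] Ys.
have [t wst] := flatten_inSj_prefix cardY Yb sz Sws (heads_in_eqS sws Ys).
by exists t; apply: eqS_trans wst.
Qed.

Lemma inPow_inSj_lmul j (b : word) (Y : {set 'I_n}) (A : word -> Prop) (s : word) :
  #|Y| = j -> heads_in Y b -> (forall v w, A w -> A (v ++ w)) ->
  (forall w, A w -> inSj p j w) ->
  inPow p A (size b).+1 s -> heads_in Y s -> inLmul p b A s.
Proof.
move=> cardY Yb A_catl A_Sj /inPow_rcons [v [w [[ws [sz [Aws vws]]] Aw svw]]] Ys.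
have [t vt] : exists t, eqS v (b ++ t).
  apply: (inPow_inSj_prefix cardY Yb).
  - by exists ws; split=> //; split=> // u /Aws /A_Sj.
  - by apply: (heads_in_catr (w := w)); apply: heads_in_eqS svw Ys.
exists (t ++ w); split; first exact: A_catl.
by rewrite catA; apply: eqS_trans svw (eqS_catr w vt).
Qed.

End SkewMonoid.

Theorem lemma4p3 (n : nat) (p : 'I_n -> 'I_n -> 'I_n * 'I_n)
  (Hskew : skew_type p) (Hnd : right_nondegenerate p)
  (i : nat) (Hi : 2 <= i <= n.+1)
  (Y Z : {set 'I_n}) (HY : #|Y| = i.-1) (HZY : Z \subset Y)
  (b : seq 'I_n) (Hb : inD p Z b) :
  let k := size b in
  (forall s, inPow p (inSj p i.-1) k s -> inD p Y s ->
     inLmul p b (fun _ => True) s) /\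
  (forall s, inPow p (inSj p i.-1) k.+1 s -> inD p Y s ->
     inLmul p b (inSj p i.-1) s) /\
  (forall s, inPow p (fun u => inSj p i.-1 u /\ inSj' p i.-1 u) k.+1 s -> inD p Y s ->
     inLmul p b (fun u => inSj p i.-1 u /\ inSj' p i.-1 u) s).
Proof.
move=> k; have Yb : heads_in p Y b by move=> x t /Hb.2 /(subsetP HZY).
split; [|split] => s Ss [_ Ys].
- by have [t bt] := inPow_inSj_prefix Hnd HY Yb Ss Ys; exists t.
- apply: (inPow_inSj_lmul Hnd HY Yb _ _ Ss Ys) => // v w.
  exact: inSj_catl.
- apply: (inPow_inSj_lmul Hnd HY Yb _ _ Ss Ys) => [v w [Sw S'w]|w []//].
  by split; [apply: inSj_catl | apply: inSj'_catl].
Qed.
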